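(* Let $\gamma>0$, $\bar\sigma>0$, $\gamma_0\in(0,\gamma)$ and $n_0$ a positive integer. Let $C(x;n_0)=\mathrm E\left[\inf\{n\ge n_0:\bar Z(n)<x\}\right]$ for $x>0$, where $\bar Z(n)$ is the average of the first $n$ terms of an i.i.d. standard normal sequence, and let $n_g=C\left(\frac{\gamma-\gamma_0}{\bar\sigma};n_0\right)-n_0$. Then $n_g\le\beta e^{-\kappa n_0}$, where $\kappa=\frac{(\gamma-\gamma_0)^2}{2\bar\sigma^2}$ and $\beta=(1-e^{-\kappa})^{-1}$. *)

From HB Require Import structures.
From mathcomp Require Import all_boot all_order all_algebra.
From mathcomp Require Import all_classical all_reals all_analysis.
Set Implicit Arguments. Unset Strict Implicit. Unset Printing Implicit Defensive.
Import Order.TTheory GRing.Theory Num.Theory.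
Import numFieldNormedType.Exports.
Local Open Scope classical_set_scope.
Local Open Scope ring_scope.

Definition mutually_independent {d} {T : measurableType d} {R : realType}
  (P : probability T R) (Z : nat -> T -> R) : Prop :=
  forall (s : seq nat) (B : nat -> set R),
    uniq s -> (forall i, measurable (B i)) ->
    P (\bigcap_(i in [set` s]) (Z i @^-1` B i)) =
    (\prod_(i <- s) P (Z i @^-1` B i))%E.

Definition iid_std_normal {d} {T : measurableType d} {R : realType}
  (P : probability T R) (Z : nat -> {RV P >-> R}) : Prop :=
  mutually_independent P (fun i => (Z i : T -> R)) /\
  forall i (A : set R), measurable A ->
    distribution P (Z i) A = normal_prob 0 1 A.

Definition sample_mean {T : Type} {R : realType} (Z : nat -> T -> R)
  (n : nat) (w : T) : R :=
  (n%:R)^-1 * \sum_(i < n) Z i w.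

(* inf{ n >= n0 : \bar Z(n) < x }, valued in \bar R (+oo if the set is empty) *)
Definition hitting_time {T : Type} {R : realType} (Z : nat -> T -> R)
  (n0 : nat) (x : R) (w : T) : \bar R :=
  ereal_inf [set (n%:R)%:E | n in [set n | (n0 <= n)%N /\ sample_mean Z n w < x]].

Definition C_exp {d} {T : measurableType d} {R : realType}
  (P : probability T R) (Z : nat -> T -> R) (x : R) (n0 : nat) : \bar R :=
  (\int[P]_w hitting_time Z n0 x w)%E.

From HB Require Import structures.
From mathcomp Require Import all_boot all_order all_algebra.
From mathcomp Require Import all_classical all_reals all_analysis.
From mathcomp Require Import measurable_realfun ring.
Set Implicit Arguments. Unset Strict Implicit. Unset Printing Implicit Defensive.
Import Order.TTheory GRing.Theory Num.Theory.
Import numFieldNormedType.Exports.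
Local Open Scope classical_set_scope.
Local Open Scope ring_scope.
Import HBNNSimple.

(* Write x := (gamma - gamma0) / sigmabar, so that kappa = x^2/2.  The hitting
   time is at most n0 plus the number of k >= n0 with \bar Z(k) >= x, hence
   C(x; n0) - n0 <= sum_{k >= n0} P(\bar Z(k) >= x).  The sum of k independent
   standard normals has moment generating function exp(k t^2/2), so Chernoff's
   bound at t = x gives P(\bar Z(k) >= x) <= exp(-kappa k), and the geometric
   tail sums to exp(-kappa n0) / (1 - exp(-kappa)). *)

Section integral_comp_weight.
Local Open Scope ereal_scope.
Context d1 d2 (X : measurableType d1) (Y : measurableType d2) (R : realType)
  (mu : {measure set X -> \bar R}) (p : X -> Y) (w : X -> R).
Hypotheses (mp : measurable_fun setT p) (mw : measurable_fun setT w)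
  (w_ge0 : forall x, (0 <= w x)%R).

Lemma integral_nnsfun_comp_weight (h : {nnsfun Y >-> R}) :
  \int[mu]_x (h (p x) * w x)%:E =
  \sum_(y \in range h) (y%:E * \int[mu]_x (\1_(h @^-1` [set y]) (p x) * w x)%:E).
Proof.
have mhw y : measurable_fun setT (fun x => \1_(h @^-1` [set y]) (p x) * w x)%R.
  by apply: measurable_funM => //; apply: measurableT_comp.
transitivity (\int[mu]_x (\sum_(y \in range h)
    (y * (\1_(h @^-1` [set y]) (p x) * w x))%:E)).
  apply: eq_integral => x _; rewrite fsumEFin //; congr EFin.
  rewrite {1}fimfunE /= mulrC fsbig_distrr //.
  by apply: eq_fsbigr => y _; rewrite /= mulrC mulrA.
rewrite ge0_integral_fsum//; last 2 first.
- by move=> y; apply/measurable_EFinP; apply: measurable_funM.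
- move=> y x _; rewrite mulrA EFinM mule_ge0 ?lee_fin//.
  by have := nnfun_muleindic_ge0 h y (p x); rewrite -EFinM.
apply: eq_fsbigr => y; rewrite inE => -[z _ <-].
under eq_integral do rewrite EFinM.
rewrite ge0_integralZl//.
- exact/measurable_EFinP.
- by move=> x _; rewrite lee_fin mulr_ge0.
- by rewrite lee_fin.
Qed.

Lemma integral_comp_weight_approx (f : Y -> R) (mf : measurable_fun setT (EFin \o f))
    (f_ge0 : forall y, (0 <= f y)%R) :
  \int[mu]_x (f (p x) * w x)%:E =
  limn (fun n => \int[mu]_x (nnsfun_approx measurableT mf n (p x) * w x)%:E).
Proof.
rewrite -monotone_convergence//.
- apply: eq_integral => x _; apply/esym/cvg_lim => //.
  under eq_fun do rewrite EFinM.
  rewrite EFinM; apply: cvgeZr => //.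
  by apply: cvg_nnsfun_approx => // y _; exact: f_ge0.
- move=> n; apply/measurable_EFinP; apply: measurable_funM => //.
  exact: measurableT_comp.
- by move=> n x _; rewrite lee_fin mulr_ge0.
- move=> x _ m n mn; rewrite lee_fin ler_wpM2r//.
  by have /lefP := nd_nnsfun_approx measurableT mf mn; apply.
Qed.

End integral_comp_weight.

(* With [p2 = id] this integrates against a density; with a constant [w2] it
   integrates out an independent factor. *)
Lemma eq_integral_comp_weight d1 d2 d3 (X1 : measurableType d1)
    (X2 : measurableType d2) (Y : measurableType d3) (R : realType)
    (mu1 : {measure set X1 -> \bar R}) (mu2 : {measure set X2 -> \bar R})
    (p1 : X1 -> Y) (p2 : X2 -> Y) (w1 : X1 -> R) (w2 : X2 -> R) (f : Y -> R) :
  measurable_fun setT p1 -> measurable_fun setT p2 ->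
  measurable_fun setT w1 -> measurable_fun setT w2 ->
  (forall x, 0 <= w1 x) -> (forall x, 0 <= w2 x) ->
  (forall B, measurable B ->
     (\int[mu1]_x (\1_B (p1 x) * w1 x)%:E = \int[mu2]_x (\1_B (p2 x) * w2 x)%:E)%E) ->
  measurable_fun setT f -> (forall y, 0 <= f y) ->
  (\int[mu1]_x (f (p1 x) * w1 x)%:E = \int[mu2]_x (f (p2 x) * w2 x)%:E)%E.
Proof.
move=> mp1 mp2 mw1 mw2 w1_ge0 w2_ge0 eq_indic mf f_ge0.
have mEf : measurable_fun setT (EFin \o f) by apply/measurable_EFinP.
rewrite (integral_comp_weight_approx mu1 mp1 mw1 w1_ge0 mEf f_ge0).
rewrite (integral_comp_weight_approx mu2 mp2 mw2 w2_ge0 mEf f_ge0).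
congr (limn _); apply/funext => n.
rewrite !integral_nnsfun_comp_weight//; apply: eq_fsbigr => y _.
by rewrite eq_indic.
Qed.

Lemma expR_mul_normal_pdf (R : realType) (t x : R) :
  expR (t * x) * normal_pdf 0 1 x = expR (t ^+ 2 / 2) * normal_pdf t 1 x.
Proof.
rewrite /normal_pdf oner_eq0 /= mulrCA [in RHS]mulrCA; congr (_ * _).
by rewrite /normal_fun -!expRD; congr expR; rewrite expr1n subr0; field.
Qed.

Lemma mmt_gen_fun_std_normal d (T : measurableType d) (R : realType)
    (P : probability T R) (X : {RV P >-> R}) :
  (forall A, measurable A -> distribution P X A = normal_prob 0 1 A) ->
  forall t : R, 'M_P X t = (expR (t ^+ 2 / 2))%:E.
Proof.
move=> X_normal t; rewrite /mmt_gen_fun unlock /=.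
under eq_integral do rewrite mulrC -[expR _]mulr1.
rewrite (@eq_integral_comp_weight _ _ _ _ _ _ _ P lebesgue_measure X id
  (fun=> 1) (normal_pdf 0 1) (fun z => expR (t * z))) //; last 4 first.
- exact: (measurable_normal_pdf 0 1).
- exact: (normal_pdf_ge0 0 1).
- move=> B mB; have mXB : measurable (X @^-1` B).
    by rewrite -[X @^-1` B]setTI; exact: measurable_funP.
  transitivity (\int[P]_x (\1_(X @^-1` B) x)%:E)%E.
    by apply: eq_integral => x _; rewrite mulr1 !indicE.
  rewrite integral_indic// setIT.
  transitivity (distribution P X B); first by [].
  rewrite X_normal// /normal_prob [LHS]integral_mkcond.
  apply: eq_integral => x _; rewrite patchE indicE.
  by case: (x \in B); rewrite ?mul1r ?mul0r.
- by apply: measurableT_comp => //; apply: measurable_funM.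
under eq_integral do rewrite expR_mul_normal_pdf EFinM.
rewrite ge0_integralZl//.
- by rewrite integral_normal_pdf mule1.
- by apply/measurable_EFinP; exact: measurable_normal_pdf.
- by move=> x _; rewrite lee_fin normal_pdf_ge0.
Qed.

Lemma set_seq_cons (T : eqType) (a : T) (t : seq T) : [set` a :: t] = a |` [set` t].
Proof.
apply/seteqP; split => x /=; rewrite inE.
- by case/orP => [/eqP ->|xt]; [left|right].
- by case => [->|xt]; rewrite ?eqxx ?xt ?orbT.
Qed.

Section independent_product.
Local Open Scope ereal_scope.
Context d (T : measurableType d) (R : realType) (P : probability T R)
  (Z : nat -> {RV P >-> R}).
Hypothesis Z_indep : mutually_independent P (fun i => (Z i : T -> R)).

Definition preimage_cap (t : seq nat) (B : nat -> set R) :=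
  \bigcap_(i in [set` t]) (Z i @^-1` B i).

Lemma preimage_cap_cons a t B :
  preimage_cap (a :: t) B = Z a @^-1` B a `&` preimage_cap t B.
Proof. by rewrite /preimage_cap set_seq_cons bigcap_setU1. Qed.

Lemma measurable_preimage_Z i (A : set R) :
  measurable A -> measurable (Z i @^-1` A).
Proof. by move=> mA; rewrite -[_ @^-1` _]setTI; exact: measurable_funP. Qed.

Lemma integral_indic_Z i (A : set R) : measurable A ->
  \int[P]_x (\1_A (Z i x))%:E = P (Z i @^-1` A).
Proof.
move=> mA; rewrite -(setIT (Z i @^-1` A)) -integral_indic//.
exact: measurable_preimage_Z.
Qed.

Lemma measurable_preimage_cap t B :
  (forall i, measurable (B i)) -> measurable (preimage_cap t B).
Proof.
move=> mB; elim: t => [|a t IH].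
  by rewrite (_ : preimage_cap _ _ = setT)//; apply/seteqP; split => // x _ i.
by rewrite preimage_cap_cons; apply: measurableI => //; exact: measurable_preimage_Z.
Qed.

Lemma preimage_cap_cons_update a t B A : a \notin t ->
  preimage_cap (a :: t) (fun j => if j == a then A else B j) =
  Z a @^-1` A `&` preimage_cap t B.
Proof.
move=> aNt; rewrite preimage_cap_cons eqxx; congr (_ `&` _).
apply: eq_bigcapr => i /= it; case: eqP => // ia.
by move: aNt; rewrite -ia it.
Qed.

Lemma probability_preimage_cap_cons a t B A : uniq t -> a \notin t ->
    measurable A -> (forall i, measurable (B i)) ->
  P (Z a @^-1` A `&` preimage_cap t B) = P (Z a @^-1` A) * P (preimage_cap t B).
Proof.
move=> ut aNt mA mB; rewrite -preimage_cap_cons_update//.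
rewrite Z_indep ?Z_indep //= ?aNt//; last by move=> j; case: eqP.
rewrite big_cons eqxx; congr (_ * _); apply: eq_big_seq => i it.
by case: eqP => // ia; move: aNt; rewrite -ia it.
Qed.

Variables (f : R -> R) (M : R).
Hypotheses (mf : measurable_fun setT f) (f_ge0 : forall y, (0 <= f y)%R)
  (f_mean : forall i, \int[P]_x (f (Z i x))%:E = M%:E).

Lemma f_mean_ge0 : (0 <= M)%R.
Proof. by rewrite -lee_fin -(f_mean 0) integral_ge0// => x _; rewrite lee_fin. Qed.

Lemma measurable_prod_comp (s : seq nat) :
  measurable_fun setT (fun x => \prod_(i <- s) f (Z i x))%R.
Proof.
elim: s => [|a s IH].
  by under eq_fun do rewrite big_nil; exact: measurable_cst.
under eq_fun do rewrite big_cons.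
by apply: measurable_funM => //; apply: measurableT_comp.
Qed.

(* The factor indexed by a fresh [a] is integrated out against the weight
   formed by the other factors; the induction needs the extra indicator so that
   this weight is again of the same shape. *)
Lemma integral_prod_comp_indic (s : seq nat) t B : uniq s -> uniq t ->
    (forall i, i \in s -> i \notin t) -> (forall i, measurable (B i)) ->
  \int[P]_x ((\prod_(i <- s) f (Z i x)) * \1_(preimage_cap t B) x)%:E =
  (M ^+ size s)%:E * P (preimage_cap t B).
Proof.
elim: s t B => [|a s IH] t B /=.
  move=> _ _ _ mB; under eq_integral do rewrite big_nil mul1r.
  rewrite integral_indic ?setIT ?expr0 ?mul1e//; exact: measurable_preimage_cap.
move=> /andP[aNs us] ut st mB.
have aNt : a \notin t by apply: st; rewrite mem_head.
have mE := measurable_preimage_cap t mB.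
pose w x := (\prod_(i <- s) f (Z i x) * \1_(preimage_cap t B) x)%R.
pose c := (M ^+ size s * fine (P (preimage_cap t B)))%R.
have c_ge0 : (0 <= c)%R by rewrite mulr_ge0 ?exprn_ge0 ?fine_ge0 ?f_mean_ge0.
have indic_weight A : measurable A ->
    \int[P]_x (\1_A (Z a x) * w x)%:E = \int[P]_x (\1_A (Z a x) * c)%:E.
  move=> mA.
  transitivity (\int[P]_x ((\prod_(i <- s) f (Z i x)) *
      \1_(preimage_cap (a :: t) (fun j => if j == a then A else B j)) x)%:E).
    by apply: eq_integral => x _; rewrite preimage_cap_cons_update// indicI mulrCA.
  rewrite IH //=; last 3 first.
  - exact/andP.
  - move=> i i_s; rewrite in_cons negb_or st ?in_cons ?i_s ?orbT// andbT.
    by apply: contraNneq aNs => <-.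
  - by move=> j; case: eqP.
  rewrite preimage_cap_cons_update// probability_preimage_cap_cons//.
  under [RHS]eq_integral do rewrite EFinM.
  rewrite ge0_integralZr//; last first.
    by apply/measurable_EFinP; apply: measurableT_comp => //; exact: measurable_indic.
  by rewrite integral_indic_Z// /c EFinM fineK ?fin_num_measure// muleCA muleA.
transitivity (\int[P]_x (f (Z a x) * w x)%:E).
  by apply: eq_integral => x _; rewrite big_cons /w mulrA.
have mw : measurable_fun setT w.
  by apply: measurable_funM; [exact: measurable_prod_comp|exact: measurable_indic].
have w_ge0 x : (0 <= w x)%R by rewrite mulr_ge0 ?prodr_ge0.
rewrite (eq_integral_comp_weight _ _ mw (measurable_cst c) w_ge0 (fun=> c_ge0)
  indic_weight mf f_ge0) //.
under eq_integral do rewrite /= EFinM.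
rewrite ge0_integralZr//; last 2 first.
- by apply/measurable_EFinP; apply: measurableT_comp.
- by move=> x _; rewrite lee_fin.
by rewrite f_mean /c !EFinM fineK ?fin_num_measure// exprS EFinM muleA.
Qed.

Lemma expectation_prod_comp (s : seq nat) : uniq s ->
  \int[P]_x (\prod_(i <- s) f (Z i x))%:E = (M ^+ size s)%:E.
Proof.
move=> us; have := @integral_prod_comp_indic s [::] (fun=> setT) us erefl
  (fun _ _ => erefl) (fun=> measurableT).
rewrite (_ : preimage_cap _ _ = setT); last by apply/seteqP; split => // x _ i.
rewrite probability_setT mule1 => <-.
by apply: eq_integral => x _; rewrite indicE in_setT mulr1.
Qed.

End independent_product.

Section iid_std_normal_tail.
Local Open Scope ereal_scope.
Context d (T : measurableType d) (R : realType) (P : probability T R)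
  (Z : nat -> {RV P >-> R}).
Hypothesis Z_iid : iid_std_normal Z.

Lemma mmt_gen_fun_sum_iid_std_normal (t : R) (n : nat) :
  'M_P (\sum_(i < n) Z i)%R t = (expR (t ^+ 2 / 2) ^+ n)%:E.
Proof.
have [Z_indep Z_normal] := Z_iid.
rewrite /mmt_gen_fun unlock /=.
transitivity (\int[P]_w (\prod_(i <- index_iota 0 n) expR (Z i w * t))%:E).
  apply: eq_integral => w _.
  by rewrite mfun_sum mulr_suml expR_sum big_mkord.
rewrite (@expectation_prod_comp _ _ _ P Z Z_indep (fun z => expR (z * t))
  (expR (t ^+ 2 / 2))) ?iota_uniq ?size_iota ?subn0//.
- by apply: measurableT_comp => //; apply: measurable_funM.
- by move=> i; rewrite -(mmt_gen_fun_std_normal (Z_normal i)) /mmt_gen_fun unlock.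
Qed.

Lemma sample_mean_ge_tail (x : R) (n : nat) : (0 < x)%R -> (0 < n)%N ->
  P [set w | x <= sample_mean (fun i => Z i : T -> R) n w]%R <=
  (expR (- (x ^+ 2 / 2)) ^+ n)%:E.
Proof.
move=> x_gt0 n_gt0.
have -> : [set w | x <= sample_mean (fun i => Z i : T -> R) n w]%R =
    [set w | n%:R * x <= (\sum_(i < n) Z i)%R w]%R.
  apply/seteqP; split => w /=;
    by rewrite /sample_mean mfun_sum ler_pdivlMl ?ltr0n.
apply: le_trans (chernoff _ _ x_gt0) _.
rewrite mmt_gen_fun_sum_iid_std_normal -EFinM lee_fin -!expRM_natl -expRD.
by rewrite (_ : _ + _ = n%:R * - (x ^+ 2 / 2))%R//; field.
Qed.

End iid_std_normal_tail.

Lemma measurable_sample_mean_ge d (T : measurableType d) (R : realType)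
    (Z : nat -> {mfun T >-> R}) (x : R) (k : nat) :
  measurable [set w | x <= sample_mean (fun i => Z i : T -> R) k w].
Proof.
have mmean : measurable_fun setT (sample_mean (fun i => Z i : T -> R) k).
  apply: measurable_funM => //.
  by under eq_fun do rewrite -mfun_sum; exact: measurable_funP.
rewrite (_ : [set w | _] = sample_mean (fun i => Z i : T -> R) k @^-1` `[x, +oo[).
  by rewrite -[_ @^-1` _]setTI; apply: mmean => //; exact: measurable_itv.
by apply/seteqP; split => w /=; rewrite in_itv /= andbT.
Qed.

(* No measurability is assumed: the hitting time is never shown measurable. *)
Lemma ge0_le_integralT d (T : measurableType d) (R : realType)
    (mu : {measure set T -> \bar R}) (f g : T -> \bar R) :
  (forall x, 0 <= f x)%E -> (forall x, f x <= g x)%E ->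
  (\int[mu]_x f x <= \int[mu]_x g x)%E.
Proof.
move=> f_ge0 fg; have g_ge0 x : (0 <= g x)%E := le_trans (f_ge0 x) (fg x).
rewrite !ge0_integralTE//; apply: ereal_sup_le => _ [h hf <-].
by exists h => //= x; exact: le_trans (hf x) (fg x).
Qed.

Lemma hitting_time_le_nneseries (T : Type) (R : realType) (Z : nat -> T -> R)
    (n0 : nat) (x : R) (w : T) :
  (hitting_time Z n0 x w <= \sum_(k <oo)
    ((if (k < n0)%N then 1 else \1_[set w' | x <= sample_mean Z k w'] w)%:E))%E.
Proof.
set series := (\sum_(k <oo) _)%E.
have series_ge m : (forall k, (k < m)%N -> (k < n0)%N \/ x <= sample_mean Z k w) ->
    (m%:R%:E <= series)%E.
  move=> one_m; apply: le_trans (nneseries_lim_ge m _); last first.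
    by move=> k _ _; rewrite lee_fin; case: ifP => // _; rewrite indicE.
  rewrite (@eq_big_nat _ _ _ 0 m _ (fun=> 1%E)) ?sumEFin ?sumr_const_nat ?subn0//.
  move=> k /andP[_ km]; case: (one_m k km) => [->//|mean_k].
  by case: ifP => // _; rewrite indicE mem_set.
have [hit|no_hit] := pselect (exists n, (n0 <= n)%N && (sample_mean Z n w < x)).
  have [m /andP[n0m mean_m] m_min] := ex_minnP hit.
  apply: le_trans (series_ge m _); first by apply: ereal_inf_lbound; exists m.
  move=> k km; have [|n0k] := ltnP k n0; [by left|right].
  by rewrite leNgt; apply: contraTN km => mean_k; rewrite -leqNgt m_min ?n0k.
suff -> : series = +oo%E by rewrite leey.
apply/eqyP => A A_gt0; apply: le_trans (series_ge (Num.truncn A).+1 _).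
  by rewrite lee_fin ltW// truncnS_gt.
move=> k _; have [|n0k] := ltnP k n0; [by left|right].
by rewrite leNgt; apply/negP => mean_k; apply: no_hit; exists k; rewrite n0k mean_k.
Qed.

Lemma nneseries_ones_geometric_le (R : realType) (q : R) (n0 : nat) : 0 < q < 1 ->
  (\sum_(k <oo) ((if (k < n0)%N then 1 else q ^+ k)%:E) <=
   (n0%:R + q ^+ n0 / (1 - q))%:E)%E.
Proof.
case/andP => q_gt0 q_lt1.
have u_ge0 k : (0 <= (if (k < n0)%N then 1 else q ^+ k)%:E)%E.
  by rewrite lee_fin; case: ifP => // _; rewrite exprn_ge0 ?ltW.
rewrite (nneseries_split _ n0)// add0n -nneseries_addn// EFinD leeD//.
  rewrite (@eq_big_nat _ _ _ 0 n0 _ (fun=> 1%E)) ?sumEFin ?sumr_const_nat ?subn0//.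
  by move=> k /andP[_ ->].
under eq_eseriesr do rewrite ltnNge leq_addl /=.
apply: lime_le.
  by apply: is_cvg_nneseries => k _ _; rewrite lee_fin exprn_ge0 ?ltW.
apply: nearW => N; rewrite sumEFin lee_fin.
rewrite (_ : \sum_(0 <= k < N) _ = series (geometric (q ^+ n0) q) N).
  by apply: geometric_le_lim; rewrite ?exprn_ge0 ?ltW ?ger0_norm ?ltW.
by rewrite /series /=; apply: eq_bigr => k _; rewrite exprD mulrC.
Qed.

Lemma C_exp_le_geometric d (T : measurableType d) (R : realType)
    (P : probability T R) (Z : nat -> {RV P >-> R}) (x q : R) (n0 : nat) :
  0 < q < 1 ->
  (forall k, (n0 <= k)%N ->
     P [set w | (x <= sample_mean (fun i => Z i : T -> R) k w)%R] <= (q ^+ k)%:E)%E ->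
  (C_exp P (fun i => Z i : T -> R) x n0 <= (n0%:R + q ^+ n0 / (1 - q))%:E)%E.
Proof.
move=> q01 tail.
have mA k := measurable_sample_mean_ge Z x k.
apply: le_trans (ge0_le_integralT P _ (hitting_time_le_nneseries _ n0 x)) _.
  by move=> w; apply/ereal_infP => _ [n _ <-]; rewrite lee_fin.
rewrite integral_nneseries//; last 2 first.
- move=> k; case: (k < n0)%N; first exact: measurable_cst.
  by apply/measurable_EFinP; exact: measurable_indic.
- by move=> k w _; rewrite lee_fin; case: ifP => // _; rewrite indicE.
apply: le_trans (nneseries_ones_geometric_le n0 q01).
apply: lee_nneseries => k _ => [_|].
  by apply: integral_ge0 => w _; rewrite lee_fin; case: ifP => // _; rewrite indicE.
case: ifPn => [_|]; first by rewrite integral_cst//= mul1e probability_setT.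
by rewrite -leqNgt integral_indic// setIT; exact: tail.
Qed.

Theorem lemma6 (R : realType) (d : measure_display) (T : measurableType d)
  (P : probability T R) (Z : nat -> {RV P >-> R})
  (gamma sigmabar gamma0 : R) (n0 : nat) :
  0 < gamma -> 0 < sigmabar -> 0 < gamma0 -> gamma0 < gamma -> (0 < n0)%N ->
  @iid_std_normal d T R P Z ->
  let kappa := (gamma - gamma0) ^+ 2 / (2 * sigmabar ^+ 2) in
  let beta := (1 - expR (- kappa))^-1 in
  let n_g := (@C_exp d T R P (fun i => (Z i : T -> R)) ((gamma - gamma0) / sigmabar) n0
              - (n0%:R)%:E)%E in
  (n_g <= (beta * expR (- kappa * n0%:R))%:E)%E.
Proof.
move=> _ sigmabar_gt0 _ gamma0_lt_gamma n0_gt0 Z_iid; cbv zeta.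
set x := (gamma - gamma0) / sigmabar.
have x_gt0 : 0 < x by rewrite divr_gt0 // subr_gt0.
have -> : (gamma - gamma0) ^+ 2 / (2 * sigmabar ^+ 2) = x ^+ 2 / 2.
  by rewrite /x; field; rewrite gt_eqF.
set q := expR (- (x ^+ 2 / 2)).
have q01 : 0 < q < 1 by rewrite expR_gt0 expR_lt1 oppr_lt0 divr_gt0 ?exprn_gt0.
rewrite expRM_natr -/q leeBlDl// mulrC.
apply: C_exp_le_geometric => // k n0k.
by apply: sample_mean_ge_tail => //; exact: leq_trans n0k.
Qed.
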